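(* Let $(\mathcal Q,d)$ be a Hadamard space, $Y$ a $\mathcal Q$-valued random variable, $o\in\mathcal Q$, and $\tau\in\mathcal S_0^+$ with $\tau'(0)=0$ and $\mathbb E[\tau'(d(Y,o))]<\infty$. Let $m\in\arg\min_{q\in\mathcal Q}\mathbb E[\tau(d(Y,q))-\tau(d(Y,o))]$. Then for all $q\in\mathcal Q$, $$\mathbb E[\tau(d(Y,q))-\tau(d(Y,m))]\ \ge\ \tau(d(q,m))\,\mathbb P(Y=m).$$
   Context: A Hadamard space is a complete metric space $(\mathcal Q,d)$ such that for all $y_0,y_1$ there is $m$ with $\frac12 d(y_0,q)^2+\frac12 d(y_1,q)^2-\frac14 d(y_0,y_1)^2\ge d(q,m)^2$ for all $q$. $\mathcal S_0^+$ is the set of nondecreasing convex $\tau:[0,\infty)\to\mathbb R$, differentiable on $(0,\infty)$ with concave derivative $\tau'$, where $\tau'(0):=\lim_{x\searrow0}\tau'(x)$, such that $\tau(0)=0$ and $\tau'(x)>0$ for $x>0$. *)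

From HB Require Import structures.
From mathcomp Require Import all_boot all_order all_algebra.
From mathcomp Require Import all_classical all_reals all_analysis.
Set Implicit Arguments. Unset Strict Implicit. Unset Printing Implicit Defensive.
Import Order.TTheory GRing.Theory Num.Theory.
Import numFieldNormedType.Exports.
Local Open Scope classical_set_scope.
Local Open Scope ring_scope.

Definition is_metric (R : realType) (Q : Type) (d : Q -> Q -> R) : Prop :=
  (forall x y, 0 <= d x y) /\
  (forall x y, d x y = 0 <-> x = y) /\
  (forall x y, d x y = d y x) /\
  (forall x y z, d x z <= d x y + d y z).

Definition metric_cauchy (R : realType) (Q : Type) (d : Q -> Q -> R)
  (u : nat -> Q) : Prop :=
  forall e : R, 0 < e -> exists N : nat, forall m n, (N <= m)%N -> (N <= n)%N ->
    d (u m) (u n) < e.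

Definition metric_converges (R : realType) (Q : Type) (d : Q -> Q -> R)
  (u : nat -> Q) (l : Q) : Prop :=
  forall e : R, 0 < e -> exists N : nat, forall n, (N <= n)%N -> d (u n) l < e.

Definition metric_complete (R : realType) (Q : Type) (d : Q -> Q -> R) : Prop :=
  forall u, metric_cauchy d u -> exists l, metric_converges d u l.

Definition hadamard_space (R : realType) (Q : Type) (d : Q -> Q -> R) : Prop :=
  is_metric d /\ metric_complete d /\
  forall y0 y1 : Q, exists m : Q, forall q : Q,
    (d q m) ^+ 2 <= 2^-1 * (d y0 q) ^+ 2 + 2^-1 * (d y1 q) ^+ 2
                    - 4^-1 * (d y0 y1) ^+ 2.

(** Open sets of the metric topology, and Borel measurability of a
    Q-valued map on a measurable space (preimages of open sets measurable;
    this is equivalent to measurability w.r.t. the Borel sigma-algebra). *)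
Definition metric_open (R : realType) (Q : Type) (d : Q -> Q -> R)
  (U : set Q) : Prop :=
  forall x, U x -> exists e : R, 0 < e /\ forall y, d x y < e -> U y.

Definition borel_measurable_map (R : realType) (Q : Type) (d : Q -> Q -> R)
  (dT : measure_display) (T : measurableType dT) (Y : T -> Q) : Prop :=
  forall U : set Q, metric_open d U -> measurable (Y @^-1` U).

Definition S0plus (R : realType) (tau : R -> R) : Prop :=
  (forall x y : R, 0 <= x -> x <= y -> tau x <= tau y) /\
  (forall x y t : R, 0 <= x -> 0 <= y -> 0 <= t -> t <= 1 ->
     tau ((1 - t) * x + t * y) <= (1 - t) * tau x + t * tau y) /\
  (forall x : R, 0 < x -> derivable tau x 1) /\
  (forall x y t : R, 0 < x -> 0 < y -> 0 <= t -> t <= 1 ->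
     (1 - t) * derive1 tau x + t * derive1 tau y <= derive1 tau ((1 - t) * x + t * y)) /\
  tau 0 = 0 /\
  (forall x : R, 0 < x -> 0 < derive1 tau x).

Definition tau_prime (R : realType) (tau : R -> R) (x : R) : R :=
  if x == 0 then lim (derive1 tau z @[z --> 0^'+]) else derive1 tau x.

From HB Require Import structures.
From mathcomp Require Import all_boot all_order all_algebra.
From mathcomp Require Import all_classical all_reals all_analysis.
From mathcomp Require Import ring lra measurable_realfun.
Import Order.TTheory GRing.Theory Num.Theory.
Import numFieldNormedType.Exports.
Local Open Scope classical_set_scope.
Local Open Scope ring_scope.
Set Implicit Arguments.
Unset Strict Implicit.

(* Let [x] be the point at parameter [t] of the geodesic from [m] to [q]; for
   dyadic [t] it is reached by repeated Hadamard midpoints. Pointwise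
   [tau (d (y, x)) <= (1 - t) tau (d (y, m)) + t tau (d (y, q))], and for [y = m]
   even [tau (d (m, x)) <= tau (t d (q, m))]. Integrating, the minimality of [m]
   yields
     [(t tau (d (q, m)) - tau (t d (q, m))) P (Y = m)
        <= t E [tau (d (Y, q)) - tau (d (Y, m))]].
   As [tau' (0+) = 0], [tau s <= s tau' s = o(s)]; divide by [t] and let [t -> 0].
   All losses are integrable thanks to the moment condition on [tau' (d (Y, o))]
   and a mean-value bound for [tau]. *)

Section S0plus_theory.
Variables (R : realType) (tau : R -> R).
Hypothesis tauS : S0plus tau.

Lemma tau_nondecreasing x y : 0 <= x -> x <= y -> tau x <= tau y.
Proof. by case: tauS => nd _; apply: nd. Qed.

Lemma tau_convex x y t : 0 <= x -> 0 <= y -> 0 <= t -> t <= 1 ->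
  tau ((1 - t) * x + t * y) <= (1 - t) * tau x + t * tau y.
Proof. by case: tauS => _ [cv _]; apply: cv. Qed.

Lemma tau_derivable x : 0 < x -> derivable tau x 1.
Proof. by case: tauS => _ [_ [der _]]; apply: der. Qed.

Lemma derive_tau_concave x y t : 0 < x -> 0 < y -> 0 <= t -> t <= 1 ->
  (1 - t) * derive1 tau x + t * derive1 tau y <= derive1 tau ((1 - t) * x + t * y).
Proof. by case: tauS => _ [_ [_ [cc _]]]; apply: cc. Qed.

Lemma tau0 : tau 0 = 0.
Proof. by case: tauS => _ [_ [_ [_ []]]]. Qed.

Lemma derive_tau_gt0 x : 0 < x -> 0 < derive1 tau x.
Proof. by case: tauS => _ [_ [_ [_ [_ pos]]]]; apply: pos. Qed.

Lemma tau_ge0 x : 0 <= x -> 0 <= tau x.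
Proof. by move=> x0; rewrite -tau0 tau_nondecreasing. Qed.

(* The difference quotient of [tau] at [a] in the direction of [b] is at most
   [tau b - tau a] by convexity, and tends to [(b - a) * tau'(a)]. *)
Lemma tau_tangent a b : 0 < a -> 0 <= b ->
  tau a + (b - a) * derive1 tau a <= tau b.
Proof.
move=> a0 b0; have [->|ba] := eqVneq b a; first by rewrite subrr mul0r addr0.
set D := derive1 tau a; set k := `|b - a|.
have k0 : 0 < k by rewrite normr_gt0 subr_eq0.
have Dlim : h^-1 *: ((tau \o shift a) h%:A - tau a) @[h --> 0^'] --> D.
  by rewrite /D derive1E; apply: tau_derivable.
rewrite -lerBrDl; apply/ler_addgt0Pr => e e0.
have ek : 0 < e / k by rewrite divr_gt0.
have near_D : \forall h \near 0^', `|D - h^-1 *: ((tau \o shift a) h%:A - tau a)| < e / k.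
  exact: (cvgrPdist_lt _ _).1 Dlim _ ek.
rewrite near_withinE in near_D; case/nbhs_ballP: near_D => del /= del0 Hdel.
set s := del / (del + 2 * k).
have s0 : 0 < s by rewrite divr_gt0 // addr_gt0 // mulr_gt0.
have s1 : s <= 1.
  by rewrite ler_pdivrMr ?addr_gt0 ?mulr_gt0 // mul1r lerDl mulr_ge0 // ltW.
set h := s * (b - a).
have h0 : h != 0 by rewrite mulf_eq0 negb_or gt_eqF //= subr_eq0.
have hdel : `|h| < del.
  rewrite normrM gtr0_norm // -/k /s mulrAC ltr_pdivrMr ?addr_gt0 ?mulr_gt0 //; nra.
have := Hdel h; rewrite /ball /= sub0r normrN => /(_ hdel h0).
have -> : h%:A + a = (1 - s) * a + s * b by rewrite /h /GRing.scale /= mulr1; ring.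
have := tau_convex (ltW a0) b0 (ltW s0) s1.
set u := tau ((1 - s) * a + s * b); rewrite /GRing.scale /= => conv quot.
have close : `|D * (b - a) - h^-1 * (u - tau a) * (b - a)| < e.
  by rewrite -mulrBl normrM -/k -(divfK (lt0r_neq0 k0) e) ltr_pM2r.
have chord : h^-1 * (u - tau a) * (b - a) <= tau b - tau a.
  have -> : h^-1 * (u - tau a) * (b - a) = (u - tau a) / s.
    by rewrite /h; field; rewrite lt0r_neq0 //= subr_eq0.
  rewrite ler_pdivrMr //; nra.
have := ler_norm (D * (b - a) - h^-1 * (u - tau a) * (b - a)); lra.
Qed.

Lemma derive_tau_nondecreasing x y : 0 < x -> x <= y ->
  derive1 tau x <= derive1 tau y.
Proof.
move=> x0 xy; have y0 := lt_le_trans x0 xy.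
have := tau_tangent x0 (ltW y0); have := tau_tangent y0 (ltW x0).
have [-> //|xny] := eqVneq x y.
have : x < y by rewrite lt_neqAle xny.
nra.
Qed.

Lemma tau_le_mul_derive s : 0 < s -> tau s <= s * derive1 tau s.
Proof. by move=> s0; have := tau_tangent s0 (lexx 0); rewrite tau0; lra. Qed.

(* Concavity of [tau'] on the chord from [1/2] to [b + c], through [b]. *)
Lemma derive_tau_shift_le b c : 1 <= b -> 0 <= c ->
  derive1 tau (b + c) <= (1 + 2 * c) * derive1 tau b.
Proof.
move=> b1 c0; pose t := (b - 2^-1) / (b + c - 2^-1).
have t0 : 0 < t by apply: divr_gt0; lra.
have t1 : t <= 1 by rewrite ler_pdivrMr; lra.
have := derive_tau_concave (x := 2^-1) (y := b + c) ltac:(lra) ltac:(lra) (ltW t0) t1.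
have -> : (1 - t) * 2^-1 + t * (b + c) = b by rewrite /t; field; lra.
have p1 : 0 < derive1 tau 2^-1 by apply: derive_tau_gt0; lra.
have p2 : 0 < derive1 tau (b + c) by apply: derive_tau_gt0; lra.
have t_ge : 1 <= (1 + 2 * c) * t.
  by rewrite /t mulrA ler_pdivlMr; [nra|lra].
move=> conc; have tp2 : t * derive1 tau (b + c) <= derive1 tau b.
  have : 0 <= (1 - t) * derive1 tau 2^-1 by rewrite mulr_ge0 //; lra.
  lra.
have : (1 + 2 * c) * (t * derive1 tau (b + c)) <= (1 + 2 * c) * derive1 tau b.
  by rewrite ler_wpM2l //; lra.
nra.
Qed.

Hypothesis derive_tau0 : derive1 tau z @[z --> 0^'+] --> 0.

Lemma tau_prime0 : tau_prime tau 0 = 0.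
Proof. by rewrite /tau_prime eqxx; apply: cvg_lim. Qed.

Lemma tau_primeE x : 0 < x -> tau_prime tau x = derive1 tau x.
Proof. by move=> x0; rewrite /tau_prime gt_eqF. Qed.

Lemma tau_prime_ge0 x : 0 <= x -> 0 <= tau_prime tau x.
Proof.
rewrite le_eqVlt => /orP[/eqP<-|x0]; first by rewrite tau_prime0.
by rewrite tau_primeE // ltW // derive_tau_gt0.
Qed.

Lemma tau_prime_nondecreasing x y : 0 <= x -> x <= y ->
  tau_prime tau x <= tau_prime tau y.
Proof.
rewrite le_eqVlt => /orP[/eqP<- y0|x0 xy].
  by rewrite tau_prime0 tau_prime_ge0.
by rewrite !tau_primeE ?(lt_le_trans x0) // derive_tau_nondecreasing.
Qed.

Lemma tau_small e : 0 < e ->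
  exists2 del, 0 < del & forall s, 0 <= s -> s < del -> tau s <= s * e.
Proof.
move=> e0; have near_0 : \forall s \near 0^'+, `|0 - derive1 tau s| < e.
  exact: (cvgrPdist_lt _ _).1 derive_tau0 _ e0.
rewrite near_withinE in near_0; case/nbhs_ballP: near_0 => del /= del0 Hdel.
exists del => // s; rewrite le_eqVlt => /orP[/eqP<- _|s0 sdel].
  by rewrite tau0 mul0r.
apply: (le_trans (tau_le_mul_derive s0)).
rewrite ler_wpM2l ?(ltW s0) //; apply/ltW/(le_lt_trans (ler_norm _)).
by have := Hdel s; rewrite /ball /= !sub0r !normrN gtr0_norm //; apply.
Qed.

(* A mean-value bound for [tau] whose dependence on [b] is only through
   [tau'(b)]: below [b = 1] use monotonicity of [tau'], above it its concavity. *)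
Lemma tau_diff_le a b c : 0 <= a -> 0 <= b -> `|a - b| <= c ->
  `|tau a - tau b| <= c * (derive1 tau (1 + c) + (1 + 2 * c) * tau_prime tau b).
Proof.
move=> a0 b0 abc; have c0 : 0 <= c := le_trans (normr_ge0 _) abc.
have K0 : 0 < derive1 tau (1 + c) by apply: derive_tau_gt0; lra.
have tb0 := tau_prime_ge0 b0.
have [ab|ba] := leP a b.
  rewrite ler0_norm ?subr_le0 ?tau_nondecreasing //.
  move: abc; rewrite ler0_norm ?subr_le0 // => abc.
  move: b0; rewrite le_eqVlt => /orP[/eqP b0|b0].
    subst b; have -> : a = 0 by apply/le_anti; rewrite a0 andbT.
    rewrite subrr oppr0; apply: mulr_ge0 => //; apply: addr_ge0; first exact: ltW.
    by apply: mulr_ge0 => //; lra.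
  have := tau_tangent b0 a0; rewrite tau_primeE //.
  have : 0 < derive1 tau b by exact: derive_tau_gt0.
  nra.
have a0' : 0 < a by exact: le_lt_trans ba.
rewrite ger0_norm; last by rewrite subr_ge0 tau_nondecreasing // ltW.
move: abc; rewrite gtr0_norm ?subr_gt0 // => abc.
have tangent := tau_tangent a0' b0.
have da : derive1 tau a <= derive1 tau (b + c).
  by apply: derive_tau_nondecreasing => //; lra.
have dbc : derive1 tau (b + c) <= derive1 tau (1 + c) + (1 + 2 * c) * tau_prime tau b.
  have [b1|b1] := ltP b 1.
    have : derive1 tau (b + c) <= derive1 tau (1 + c).
      by apply: derive_tau_nondecreasing => //; lra.
    have : 0 <= (1 + 2 * c) * tau_prime tau b by rewrite mulr_ge0 //; lra.
    lra.
  rewrite tau_primeE; last lra.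
  have := derive_tau_shift_le b1 c0; lra.
have : 0 < derive1 tau a by exact: derive_tau_gt0.
nra.
Qed.

End S0plus_theory.

Section metric.
Variables (R : realType) (Q : Type) (d : Q -> Q -> R).
Hypothesis dM : is_metric d.

Lemma dist_ge0 x y : 0 <= d x y.
Proof. by case: dM => d0 _; apply: d0. Qed.

Lemma dist_eq0 x y : d x y = 0 <-> x = y.
Proof. by case: dM => _ [dE _]; apply: dE. Qed.

Lemma distC x y : d x y = d y x.
Proof. by case: dM => _ [_ [dC _]]; apply: dC. Qed.

Lemma dist_triangle x y z : d x z <= d x y + d y z.
Proof. by case: dM => _ [_ [_ dT]]; apply: dT. Qed.

Lemma distxx x : d x x = 0.
Proof. exact/dist_eq0. Qed.

Variables (dT : measure_display) (T : measurableType dT) (Y : T -> Q).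
Hypothesis Ymeas : borel_measurable_map d Y.

Lemma measurable_dist x : measurable_fun setT (fun w => d (Y w) x).
Proof.
apply: (measurability (@RGenOInfty.G R)) => [|/= _ [_] [r] -> <-].
  exact: RGenOInfty.measurableE.
apply: measurableI => //.
have -> : (fun w => d (Y w) x) @^-1` `]r, +oo[%classic = Y @^-1` [set z | r < d z x].
  by apply/seteqP; split => w /=; rewrite in_itv /= andbT.
apply: Ymeas => z /= rz; exists (d z x - r); split; first by rewrite subr_gt0.
by move=> y; have := dist_triangle z y x; lra.
Qed.

Lemma measurable_nondecreasing_dist (f : R -> R) x :
  (forall a b, 0 <= a -> a <= b -> f a <= f b) ->
  measurable_fun setT (fun w => f (d (Y w) x)).
Proof.
move=> f_nd.
have -> : (fun w => f (d (Y w) x)) = (fun r => f (Num.max r 0)) \o (fun w => d (Y w) x).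
  by apply/funext => w /=; rewrite max_l // dist_ge0.
apply: measurableT_comp (measurable_dist x).
apply: nondecreasing_measurable => // a b ab; apply: f_nd.
  by rewrite le_max lexx orbT.
by rewrite ge_max !le_max ab lexx /= orbT.
Qed.

Lemma measurable_fiber x : measurable [set w | Y w = x].
Proof.
have -> : [set w | Y w = x] = ~` (Y @^-1` [set z | z <> x]).
  by apply/seteqP; split => w /=; [move=> -> /(_ erefl)|move/contrapT].
apply/measurableC/Ymeas => z /= zx; exists (d z x); split.
  by rewrite lt_neqAle dist_ge0 andbT eq_sym; apply/negP => /eqP /dist_eq0.
by move=> y yz yx; rewrite yx ltxx in yz.
Qed.

End metric.

(* Only the two properties of the geodesic point used below are recorded. *)
Definition convex_interpolant (R : realType) (Q : Type) (d : Q -> Q -> R)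
    (tau : R -> R) (m q : Q) (t : R) (x : Q) : Prop :=
  d m x <= t * d m q /\
  forall y, tau (d y x) <= (1 - t) * tau (d y m) + t * tau (d y q).

Section hadamard.
Variables (R : realType) (Q : Type) (d : Q -> Q -> R).
Hypothesis dH : hadamard_space d.
Let dM : is_metric d := proj1 dH.

Lemma hadamard_midpoint y0 y1 : exists z,
  d y0 z <= d y0 y1 / 2 /\ forall y, d y z <= (d y y0 + d y y1) / 2.
Proof.
have [z Hz] := (proj2 (proj2 dH)) y0 y1; exists z; split.
  have := Hz y0; have := dist_ge0 dM y0 z; have := dist_ge0 dM y0 y1.
  by rewrite distxx // (distC dM y1 y0) => ? ? ?; nra.
move=> y; have := Hz y.
have := dist_triangle dM y y0 y1; have := dist_triangle dM y y1 y0.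
rewrite (distC dM y0 y) (distC dM y1 y) (distC dM y1 y0).
have := dist_ge0 dM y z; have := dist_ge0 dM y y0.
have := dist_ge0 dM y y1; have := dist_ge0 dM y0 y1.
move=> ? ? ? ? ? ? ?; nra.
Qed.

Variable tau : R -> R.
Hypothesis tauS : S0plus tau.

Lemma dyadic_interpolant m q n : exists x t,
  [/\ 0 < t, t * n.+1%:R <= 1 & convex_interpolant d tau m q t x].
Proof.
elim: n => [|n [x [t [t0 tn [dx Hx]]]]].
  exists q, 1; split; rewrite ?mul1r //; split => [|y]; first by rewrite mul1r.
  by rewrite subrr mul0r add0r mul1r.
have [z [dz Hz]] := hadamard_midpoint m x.
have n1 : 1 <= n.+1%:R :> R by rewrite ler1n.
exists z, (t / 2); split.
- by rewrite divr_gt0.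
- have t1 : t <= 1 by nra.
  by rewrite [n.+2%:R]mulrS mulrDr mulr1 mulrAC; lra.
split; first by have := dist_ge0 dM m q; nra.
move=> y; have half_ge0 : 0 <= 2^-1 :> R by [].
have half_le1 : 2^-1 <= 1 :> R by rewrite invf_le1 ?ler1n.
have := tau_convex tauS (dist_ge0 dM y m) (dist_ge0 dM y x) half_ge0 half_le1.
have : tau (d y z) <= tau ((1 - 2^-1) * d y m + 2^-1 * d y x).
  by apply: (tau_nondecreasing tauS (dist_ge0 dM y z)); have := Hz y; lra.
have := Hx y; lra.
Qed.

Hypothesis derive_tau0 : derive1 tau z @[z --> 0^'+] --> 0.

Lemma interpolant_tau_small m q e : 0 < e -> exists x t,
  [/\ 0 < t, convex_interpolant d tau m q t x & tau (t * d m q) <= t * e].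
Proof.
move=> e0; set D := d m q; have D0 : 0 <= D := dist_ge0 dM m q.
have [del del0 small] := tau_small tauS derive_tau0 (divr_gt0 e0 (ltr_pwDl ltr01 D0)).
have D_del0 : 0 <= D / del by rewrite divr_ge0 // ltW.
have [x [t [t0 tn interp]]] := dyadic_interpolant m q (Num.Def.archi_bound (D / del)).
exists x, t; split => //.
set n := Num.Def.archi_bound (D / del) in tn.
have Dn : D < n%:R * del by rewrite -ltr_pdivrMr // archi_boundP.
have tD_del : t * D < del.
  rewrite -addn1 natrD in tn; have : 0 <= n%:R :> R by [].
  nra.
apply: le_trans (small _ (mulr_ge0 (ltW t0) D0) tD_del) _.
rewrite -mulrA ler_wpM2l ?(ltW t0) // mulrA ler_pdivrMr; [nra|lra].
Qed.

End hadamard.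

Section minimizer.
Variables (R : realType) (Q : Type) (d : Q -> Q -> R).
Variables (dT : measure_display) (T : measurableType dT) (P : probability T R).
Variables (Y : T -> Q) (o : Q) (tau : R -> R).
Hypotheses (dM : is_metric d) (Ymeas : borel_measurable_map d Y).
Hypotheses (tauS : S0plus tau) (derive_tau0 : derive1 tau z @[z --> 0^'+] --> 0).
Hypothesis tau'_dist_o : (\int[P]_w (tau_prime tau (d (Y w) o))%:E < +oo)%E.

Lemma integrable_tau_prime_dist :
  P.-integrable setT (fun w => (tau_prime tau (d (Y w) o))%:E).
Proof.
apply/integrableP; split.
  apply/measurable_EFinP/measurable_nondecreasing_dist => // a b a0 ab.
  exact: tau_prime_nondecreasing.
under eq_integral do rewrite gee0_abs ?lee_fin ?tau_prime_ge0 ?dist_ge0 //.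
exact: tau'_dist_o.
Qed.

(* Pointwise [|tau (d (Y, x)) - tau (d (Y, o))|] is dominated by an affine
   function of [tau' (d (Y, o))], by [tau_diff_le] with [c := d (x, o)]. *)
Lemma integrable_tau_dist_diff x :
  P.-integrable setT (fun w => (tau (d (Y w) x) - tau (d (Y w) o))%:E).
Proof.
set c := d x o; set K := derive1 tau (1 + c).
have c0 : 0 <= c := dist_ge0 dM x o.
have K0 : 0 < K by apply: derive_tau_gt0 => //; lra.
have dominating : P.-integrable setT
    (fun w => (c * K + c * (1 + 2 * c) * tau_prime tau (d (Y w) o))%:E).
  apply: (eq_integrable measurableT (fun w => (c * K)%:E +
      (c * (1 + 2 * c))%:E * (tau_prime tau (d (Y w) o))%:E)%E).
    by move=> w _; rewrite /= EFinD EFinM.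
  apply: integrableD => //; first exact: finite_measure_integrable_cst.
  exact/integrableZl/integrable_tau_prime_dist.
apply: (le_integrable measurableT _ _ dominating).
  apply/measurable_EFinP; apply: measurable_funB;
    exact: (measurable_nondecreasing_dist dM Ymeas _ (tau_nondecreasing tauS)).
move=> w _; rewrite !abse_EFin lee_fin.
rewrite [leRHS]ger0_norm; last first.
  apply: addr_ge0; first exact: mulr_ge0 c0 (ltW K0).
  apply: mulr_ge0; last exact: tau_prime_ge0 (dist_ge0 dM _ _).
  by apply: mulr_ge0 => //; lra.
have dist_diff : `|d (Y w) x - d (Y w) o| <= c.
  rewrite ler_norml; have := dist_triangle dM (Y w) o x.
  have := dist_triangle dM (Y w) x o; rewrite (distC dM o x) -/c; lra.
have := tau_diff_le tauS derive_tau0 (dist_ge0 dM _ _) (dist_ge0 dM _ _) dist_diff.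
by rewrite -/K mulrDr mulrA.
Qed.

Lemma integrable_tau_dist_sub x y :
  P.-integrable setT (fun w => (tau (d (Y w) x) - tau (d (Y w) y))%:E).
Proof.
have := integrableB measurableT (integrable_tau_dist_diff x) (integrable_tau_dist_diff y).
apply: eq_integrable => // w _; rewrite /= -EFinD; congr EFin; ring.
Qed.

Variable m : Q.
Hypothesis m_min : forall q : Q,
  (\int[P]_w (tau (d (Y w) m) - tau (d (Y w) o))%:E
   <= \int[P]_w (tau (d (Y w) q) - tau (d (Y w) o))%:E)%E.

(* Compare [m] with the interpolant [x]: off [Y = m] the convexity bound holds,
   while on [Y = m] the loss grows by [tau (d (m, x)) <= tau (t d (q, m))]
   instead of [t tau (d (q, m))]. *)
Lemma minimizer_interpolant_le q t x : 0 < t -> convex_interpolant d tau m q t x ->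
  ((t * tau (d q m) - tau (t * d q m))%:E * P [set w | Y w = m]
   <= t%:E * \int[P]_w (tau (d (Y w) q) - tau (d (Y w) m))%:E)%E.
Proof.
move=> t0 [dmx Hx]; set A := [set w | Y w = m]; set D := d q m.
set c := tau (t * D) - t * tau D.
have mA : measurable A := measurable_fiber dM Ymeas m.
pose f z w := tau (d (Y w) z) - tau (d (Y w) o).
pose g w := tau (d (Y w) q) - tau (d (Y w) m).
have Ig : P.-integrable setT (fun w => (g w)%:E) := integrable_tau_dist_sub q m.
have IA : P.-integrable setT (fun w => (\1_A w)%:E) := integrable_indic P mA.
have pointwise w : f x w <= f m w + (t * g w + c * \1_A w).
  rewrite /f /g indicE; have [Ywm|Ywm] := pselect (Y w = m).
    rewrite mem_set // mulr1 Ywm distxx // tau0 // (distC dM m q) -/D.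
    have : tau (d m x) <= tau (t * D).
      by apply: (tau_nondecreasing tauS (dist_ge0 dM m x)); rewrite /D (distC dM q m).
    rewrite /c; lra.
  rewrite memNset // mulr0 addr0; have := Hx (Y w); lra.
have int_rhs : (\int[P]_w (f m w + (t * g w + c * \1_A w))%:E
    = \int[P]_w (f m w)%:E + (t%:E * \int[P]_w (g w)%:E + c%:E * P A))%E.
  rewrite (eq_integral (fun w => (f m w)%:E +
      (t%:E * (g w)%:E + c%:E * (\1_A w)%:E)))%E; last first.
    by move=> w _; rewrite -!EFinM -!EFinD.
  rewrite integralD //; first last.
  - exact: integrableD (integrableZl _ _ Ig) (integrableZl _ _ IA).
  - exact: integrable_tau_dist_diff.
  rewrite integralD ?integralZl //; try exact: integrableZl.
  by rewrite integral_indic // setIT.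
have Fx_le : (\int[P]_w (f x w)%:E
    <= \int[P]_w (f m w + (t * g w + c * \1_A w))%:E)%E.
  apply: le_integral => //.
  - exact: integrable_tau_dist_diff.
  - apply: (eq_integrable measurableT
        (fun w => (f m w)%:E + ((t * g w)%:E + (c * \1_A w)%:E))%E).
      by move=> w _; rewrite -!EFinD.
    apply: integrableD => //; first exact: integrable_tau_dist_diff.
    apply: integrableD => //.
      by apply: eq_integrable (integrableZl _ t Ig) => // w _; rewrite EFinM.
    by apply: eq_integrable (integrableZl _ c IA) => // w _; rewrite EFinM.
  - by move=> w _; rewrite lee_fin pointwise.
have Fm_fin := integrable_fin_num measurableT (integrable_tau_dist_diff m).
have G_fin := integrable_fin_num measurableT Ig.
have PA_fin : P A \is a fin_num by apply: fin_num_measure.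
have := le_trans (m_min x) Fx_le; rewrite int_rhs.
rewrite -(fineK Fm_fin) -(fineK G_fin) -(fineK PA_fin) -!EFinM -!EFinD !lee_fin.
rewrite /c; lra.
Qed.

End minimizer.

Unset Implicit Arguments.

Theorem mainTheorem9 (R : realType) (Q : Type) (d : Q -> Q -> R)
  (dT : measure_display) (T : measurableType dT) (P : probability T R)
  (Y : T -> Q) (o : Q) (tau : R -> R) (m : Q) :
  hadamard_space d ->
  borel_measurable_map d Y ->
  S0plus tau ->
  derive1 tau z @[z --> 0^'+] --> 0 ->
  (\int[P]_w (tau_prime tau (d (Y w) o))%:E < +oo)%E ->
  (forall q : Q,
     (\int[P]_w (tau (d (Y w) m) - tau (d (Y w) o))%:E
      <= \int[P]_w (tau (d (Y w) q) - tau (d (Y w) o))%:E)%E) ->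
  forall q : Q,
    ((tau (d q m))%:E * P [set w | Y w = m]
     <= \int[P]_w (tau (d (Y w) q) - tau (d (Y w) m))%:E)%E.
Proof.
move=> dH Ymeas tauS derive_tau0 tau'_dist_o m_min q.
have dM : is_metric d := proj1 dH.
have G_fin := integrable_fin_num measurableT
  (integrable_tau_dist_sub dM Ymeas tauS derive_tau0 tau'_dist_o q m).
have mA := measurable_fiber dM Ymeas m.
have PA_fin : P [set w | Y w = m] \is a fin_num by apply: fin_num_measure.
have p0 : 0 <= fine (P [set w | Y w = m]) by rewrite fine_ge0 // measure_ge0.
have p1 : fine (P [set w | Y w = m]) <= 1.
  by rewrite -lee_fin fineK // probability_le1.
rewrite -(fineK G_fin) -(fineK PA_fin) -EFinM lee_fin.
apply/ler_addgt0Pr => e e0.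
have [x [t [t0 interp small]]] := interpolant_tau_small dH tauS derive_tau0 m q e0.
have tau_tD := tau_ge0 tauS (mulr_ge0 (ltW t0) (dist_ge0 dM m q)).
have := minimizer_interpolant_le dM Ymeas tauS derive_tau0 tau'_dist_o m_min t0 interp.
rewrite -(fineK G_fin) -(fineK PA_fin) -!EFinM lee_fin (distC dM q m) => key.
have : t * (tau (d m q) * fine (P [set w | Y w = m]))
    <= t * (fine (\int[P]_w (tau (d (Y w) q) - tau (d (Y w) m))%:E) + e) by nra.
by rewrite ler_pM2l.
Qed.
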